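(* Let $\Gamma$ be any context of $\lambda\mathsf{HOL}$ (possibly extended by constants and additional conversion rules) in which there are a type $A:\square$ and terms $\mathsf{intro}:T\,A\to A$ and $\mathsf{match}:A\to T\,A$ such that $\mathsf{match}\circ\mathsf{intro}$ is judgementally equal to $T\,(\mathsf{intro}\circ\mathsf{match})$; explicitly, for all $u:T\,A$ and $p:\mathsf{Pow}\,A$, $\mathsf{match}\,(\mathsf{intro}\,u)\,p$ is judgementally equal to $u\,(\lambda_{x:A}\,p\,(\mathsf{intro}\,(\mathsf{match}\,x)))$. Then there is a term of type $\perp$ in $\Gamma$.
   Context: $\lambda\mathsf{HOL}$ (minimal higher-order logic) is the pure type system with sorts $*,\square,\Delta$, axioms $*:\square$ and $\square:\Delta$, and rules $( *,* )$, $(\square,\square)$, $(\square,* )$; judgemental equality is $\beta$-conversion. Define $\mathsf{Pow}\,X = X\to *$ and $T\,X=\mathsf{Pow}(\mathsf{Pow}\,X)$. For $f:X\to Y$, define $T\,f:T\,X\to T\,Y$ by $T\,f\,F\,q = F\,(\lambda_{x:X}\,q\,(f\,x))$, and $g\circ f=\lambda_{x:X}\,g\,(f\,x)$. Define $\perp:*$ by $\perp=\forall_{p:*}\,p$. *)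

(* Deep embedding of the pure type system lambda-HOL
   (de Bruijn indices), with judgemental equality given by a parameter
   relation [eqr] required to be a congruence containing beta
   (i.e. beta-conversion possibly extended by additional conversion rules). *)
From Stdlib Require Import List Arith.
Import ListNotations.

Inductive sort : Set := Star | Box | Tri.

Inductive term : Set :=
| Srt : sort -> term
| Var : nat -> term
| Pi  : term -> term -> term   (* Pi A B, B under one binder *)
| Lam : term -> term -> term   (* Lam A b, b under one binder *)
| App : term -> term -> term.

Fixpoint lift (n k : nat) (t : term) : term :=
  match t with
  | Srt s => Srt s
  | Var i => if k <=? i then Var (i + n) else Var i
  | Pi A B => Pi (lift n k A) (lift n (S k) B)
  | Lam A b => Lam (lift n k A) (lift n (S k) b)
  | App f a => App (lift n k f) (lift n k a)
  end.

Fixpoint subst (u : term) (k : nat) (t : term) : term :=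
  match t with
  | Srt s => Srt s
  | Var i => match Nat.compare i k with
             | Lt => Var i
             | Eq => lift k 0 u
             | Gt => Var (pred i)
             end
  | Pi A B => Pi (subst u k A) (subst u (S k) B)
  | Lam A b => Lam (subst u k A) (subst u (S k) b)
  | App f a => App (subst u k f) (subst u k a)
  end.

Inductive beta1 : term -> term -> Prop :=
| beta_redex : forall A b a, beta1 (App (Lam A b) a) (subst a 0 b)
| beta_pi1 : forall A A' B, beta1 A A' -> beta1 (Pi A B) (Pi A' B)
| beta_pi2 : forall A B B', beta1 B B' -> beta1 (Pi A B) (Pi A B')
| beta_lam1 : forall A A' b, beta1 A A' -> beta1 (Lam A b) (Lam A' b)
| beta_lam2 : forall A b b', beta1 b b' -> beta1 (Lam A b) (Lam A b')
| beta_app1 : forall f f' a, beta1 f f' -> beta1 (App f a) (App f' a)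
| beta_app2 : forall f a a', beta1 a a' -> beta1 (App f a) (App f a').

Record judg_eq (eqr : term -> term -> Prop) : Prop := {
  je_refl  : forall t, eqr t t;
  je_sym   : forall t u, eqr t u -> eqr u t;
  je_trans : forall t u v, eqr t u -> eqr u v -> eqr t v;
  je_beta  : forall t u, beta1 t u -> eqr t u;
  je_pi    : forall A A' B B', eqr A A' -> eqr B B' -> eqr (Pi A B) (Pi A' B');
  je_lam   : forall A A' b b', eqr A A' -> eqr b b' -> eqr (Lam A b) (Lam A' b');
  je_app   : forall f f' a a', eqr f f' -> eqr a a' -> eqr (App f a) (App f' a')
}.

Inductive ax : sort -> sort -> Prop :=
| ax_star : ax Star Box
| ax_box  : ax Box Tri.

Inductive rl : sort -> sort -> Prop :=
| rl_ss : rl Star Star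
| rl_bb : rl Box Box
| rl_bs : rl Box Star.

(* contexts: the head is the most recently declared variable (index 0) *)
Definition ctx := list term.

Inductive typ (eqr : term -> term -> Prop) : ctx -> term -> term -> Prop :=
| t_ax : forall s1 s2, ax s1 s2 -> typ eqr [] (Srt s1) (Srt s2)
| t_start : forall G A s, typ eqr G A (Srt s) ->
    typ eqr (A :: G) (Var 0) (lift 1 0 A)
| t_weak : forall G t B C s, typ eqr G t B -> typ eqr G C (Srt s) ->
    typ eqr (C :: G) (lift 1 0 t) (lift 1 0 B)
| t_pi : forall G A B s1 s2, rl s1 s2 ->
    typ eqr G A (Srt s1) -> typ eqr (A :: G) B (Srt s2) ->
    typ eqr G (Pi A B) (Srt s2)
| t_lam : forall G A b B s, typ eqr (A :: G) b B -> typ eqr G (Pi A B) (Srt s) ->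
    typ eqr G (Lam A b) (Pi A B)
| t_app : forall G f a A B, typ eqr G f (Pi A B) -> typ eqr G a A ->
    typ eqr G (App f a) (subst a 0 B)
| t_conv : forall G t B B' s, typ eqr G t B -> typ eqr G B' (Srt s) -> eqr B B' ->
    typ eqr G t B'.

Definition arr (A B : term) : term := Pi A (lift 1 0 B).
Definition Pow (X : term) : term := arr X (Srt Star).
Definition TT (X : term) : term := Pow (Pow X).
Definition Bot : term := Pi (Srt Star) (Var 0).

(* The equation  match (intro u) p == u (fun x : A => p (intro (match x)))
   for A, intro, match living in G and weakened by k further declarations. *)
Definition eqn_lhs (k : nat) (it mt u p : term) : term :=
  App (App (lift k 0 mt) (App (lift k 0 it) u)) p.
Definition eqn_rhs (k : nat) (A it mt u p : term) : term :=
  App u (Lam (lift k 0 A)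
    (App (lift 1 0 p) (App (lift (S k) 0 it) (App (lift (S k) 0 mt) (Var 0))))).

(* The argument is a Russell-style paradox:

   - a predicate P : Pow A is *closed* if  match x P  implies  P x  for all x;
     the closed predicates form  Cl : T A,  and  Omega := intro Cl;
   - induction: every closed P holds at Omega (since  match Omega P
     converts to  Cl (P o intro o match),  and  P o intro o match  is closed);
   - call x *stable* if  match x Q  implies  Q (intro (match x))  for all Q;
     the Russell predicate  R x := ~ stable x  is closed, and Omega is stable;
   - hence induction gives  R Omega, contradicting the stability of Omega. *)

From Stdlib Require Import List Arith Lia.
Import ListNotations.

Lemma lift_lift t : forall n m k j, k <= j -> j <= k + n ->
  lift m j (lift n k t) = lift (m + n) k t.
Proof.
  induction t; intros n' m k j Hkj Hjk; simpl.
  - reflexivity.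
  - destruct (Nat.leb_spec k n); simpl.
    + destruct (Nat.leb_spec j (n + n')); [f_equal; lia | lia].
    + destruct (Nat.leb_spec j n); [lia | reflexivity].
  - f_equal; [apply IHt1 | apply IHt2]; lia.
  - f_equal; [apply IHt1 | apply IHt2]; lia.
  - f_equal; [apply IHt1 | apply IHt2]; lia.
Qed.

Lemma subst_lift t : forall u n k j, k <= j -> j <= k + n ->
  subst u j (lift (S n) k t) = lift n k t.
Proof.
  induction t; intros u n' k j Hkj Hjk; simpl.
  - reflexivity.
  - destruct (Nat.leb_spec k n); simpl.
    + destruct (Nat.compare_spec (n + S n') j); try lia. f_equal; lia.
    + destruct (Nat.compare_spec n j); try lia. reflexivity.
  - f_equal; [apply IHt1 | apply IHt2]; lia.
  - f_equal; [apply IHt1 | apply IHt2]; lia.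
  - f_equal; [apply IHt1 | apply IHt2]; lia.
Qed.

Lemma lift0 t : forall k, lift 0 k t = t.
Proof.
  induction t; intros; simpl; try (f_equal; auto; fail).
  destruct (k <=? n); f_equal; lia.
Qed.

(* [ext eqr G D]: the declarations D (innermost first) form a well-formed
   extension of G, i.e. [D ++ G] is a legal context if G is. *)
Inductive ext (eqr : term -> term -> Prop) (G : ctx) : ctx -> Prop :=
| ext_nil : ext eqr G []
| ext_cons : forall D C s, ext eqr G D -> typ eqr (D ++ G) C (Srt s) ->
    ext eqr G (C :: D).

(* Any derivable judgement in G witnesses that G is legal, so  * : Box  in G. *)
Lemma star_in eqr G t T : typ eqr G t T -> typ eqr G (Srt Star) (Srt Box).
Proof.
  induction 1; auto.
  - constructor; constructor.
  - exact (t_weak eqr G (Srt Star) (Srt Box) A s IHtyp H).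
  - exact (t_weak eqr G (Srt Star) (Srt Box) C s IHtyp1 H0).
Qed.

Lemma weaken eqr G D t T : ext eqr G D -> typ eqr G t T ->
  typ eqr (D ++ G) (lift (length D) 0 t) (lift (length D) 0 T).
Proof.
  induction 1 as [|D C s HD IH HC]; intros Ht.
  - simpl. rewrite !lift0. exact Ht.
  - simpl. rewrite <- (Nat.add_1_l (length D)).
    rewrite <- !(lift_lift _ (length D) 1 0 0) by lia.
    eapply t_weak; eauto.
Qed.

Lemma typ_var eqr G D n X T : ext eqr G D -> nth_error D n = Some X ->
  lift (S n) 0 X = T -> typ eqr (D ++ G) (Var n) T.
Proof.
  intros HD; revert n X T; induction HD as [|D C s HD IH HC];
    intros n X T Hn <-; [destruct n; discriminate |].
  destruct n as [|n]; simpl in Hn.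
  - injection Hn as ->. eapply t_start; eauto.
  - replace (Var (S n)) with (lift 1 0 (Var n)) by (simpl; f_equal; lia).
    replace (lift (S (S n)) 0 X) with (lift 1 0 (lift (S n) 0 X))
      by (rewrite lift_lift by lia; reflexivity).
    eapply t_weak; eauto.
Qed.

(* The typing rules restated with the context as an extension [D ++ G] and
   the type determined up to an equation, so that they can be applied
   blindly and the type computed afterwards. *)
Section DerivedRules.
Variables (eqr : term -> term -> Prop) (G D : ctx).

Lemma typ_base t T0 T : typ eqr G t T0 -> T0 = T -> typ eqr ([] ++ G) t T.
Proof. intros; subst; assumption. Qed.

Lemma typ_leaf t T0 k T : ext eqr G D -> typ eqr G t T0 -> k = length D ->
  lift k 0 T0 = T -> typ eqr (D ++ G) (lift k 0 t) T.
Proof. intros; subst; apply weaken; auto. Qed.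

Lemma typ_star T : ext eqr G D -> typ eqr G (Srt Star) (Srt Box) ->
  Srt Box = T -> typ eqr (D ++ G) (Srt Star) T.
Proof.
  intros HD H <-. change (Srt Star) with (lift (length D) 0 (Srt Star)) at 1.
  change (Srt Box) with (lift (length D) 0 (Srt Box)). apply weaken; auto.
Qed.

Lemma typ_pi X B s1 s2 T : typ eqr (D ++ G) X (Srt s1) ->
  typ eqr ((X :: D) ++ G) B (Srt s2) -> rl s1 s2 -> Srt s2 = T ->
  typ eqr (D ++ G) (Pi X B) T.
Proof. intros; subst; eapply t_pi; eauto. Qed.

Lemma typ_lam X b B s T : typ eqr ((X :: D) ++ G) b B ->
  typ eqr (D ++ G) (Pi X B) (Srt s) -> Pi X B = T ->
  typ eqr (D ++ G) (Lam X b) T.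
Proof. intros; subst; eapply t_lam; eauto. Qed.

Lemma typ_app f a X B T : typ eqr (D ++ G) f (Pi X B) ->
  typ eqr (D ++ G) a X -> subst a 0 B = T ->
  typ eqr (D ++ G) (App f a) T.
Proof. intros; subst; eapply t_app; eauto. Qed.

(* [eqr_in D] is [eqr], tagged with the extension D in which the conversion
   takes place (needed to instantiate the hypothesis on match/intro). *)
Definition eqr_in (D' : ctx) := eqr.

Lemma typ_conv t B B' s : typ eqr (D ++ G) t B ->
  eqr_in D B B' -> typ eqr (D ++ G) B' (Srt s) -> typ eqr (D ++ G) t B'.
Proof. intros; eapply t_conv; eauto. Qed.
End DerivedRules.

Section Conversion.
Variable eqr : term -> term -> Prop.
Hypothesis HJ : judg_eq eqr.

Lemma eqr_beta_l X X' Y : beta1 X X' -> eqr X' Y -> eqr X Y.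
Proof. intros H1 H2. eapply (je_trans _ HJ); [apply (je_beta _ HJ) |]; eauto. Qed.

Lemma eqr_beta_r X Y Y' : beta1 Y Y' -> eqr X Y' -> eqr X Y.
Proof.
  intros H1 H2. eapply (je_trans _ HJ); [exact H2 |].
  apply (je_sym _ HJ), (je_beta _ HJ); exact H1.
Qed.

Lemma eqr_rw_l X M Y : eqr X M -> eqr M Y -> eqr X Y.
Proof. apply (je_trans _ HJ). Qed.

Lemma eqr_rw_r X M Y : eqr Y M -> eqr X M -> eqr X Y.
Proof. intros H1 H2; eapply (je_trans _ HJ); [exact H2 | apply (je_sym _ HJ); exact H1]. Qed.
End Conversion.

Ltac norm := repeat progress (simpl;
  repeat (first [rewrite lift_lift by lia | rewrite subst_lift by lia | rewrite lift0])).
Ltac norm_in H := repeat progress (simpl in H;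
  repeat (first [rewrite lift_lift in H by lia | rewrite subst_lift in H by lia
                | rewrite lift0 in H])).
Ltac eqt := norm; reflexivity.

Ltac beta_step := match goal with
 | |- beta1 (App (Lam _ _) _) _ => apply beta_redex
 | |- beta1 (App _ _) _ => first [apply beta_app1; beta_step | apply beta_app2; beta_step]
 | |- beta1 (Pi _ _) _ => first [apply beta_pi1; beta_step | apply beta_pi2; beta_step]
 | |- beta1 (Lam _ _) _ => first [apply beta_lam1; beta_step | apply beta_lam2; beta_step]
 end.

Ltac beta_normalize HJ :=
  repeat (eapply (eqr_beta_l _ HJ); [beta_step | norm]);
  repeat (eapply (eqr_beta_r _ HJ); [beta_step | norm]);
  apply (je_refl _ HJ).

(* Hook: the opaque closed terms that a conversion may unfold. *)
Ltac unfolds := idtac.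

(* [tcc] builds a typing derivation of an explicit term in [D ++ G]:
   syntax-directed rules, leaves [lift k 0 t] typed by weakening a hypothesis
   [typ eqr G t _], and conversions proved by the match/intro equation (tried
   on either side), unfolding of the names listed in [unfolds], and beta. *)
Ltac tcext := first [assumption | apply ext_nil | eapply ext_cons; [tcext | tcc]]
  with remember_ext e G X D :=
    first [ match goal with H : ext e G (X :: D) |- _ => idtac end
          | let H := fresh "HE" in
            assert (H : ext e G (X :: D)) by (eapply ext_cons; [tcext | tcc]) ]
  with tcc := first [tc | conv]
  with tc := lazymatch goal with
   | |- typ _ (_ ++ _) (Srt Star) _ => eapply typ_star; [tcext | eassumption | eqt]
   | |- typ _ (_ ++ _) (Var _) _ => eapply typ_var; [tcext | reflexivity | eqt]
   | |- typ ?e (?D ++ ?G) (Pi ?X _) _ =>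
       remember_ext e G X D; eapply typ_pi; [tcc | tcc | constructor | eqt]
   | |- typ ?e (?D ++ ?G) (Lam ?X _) _ =>
       remember_ext e G X D; eapply typ_lam; [tcc | tcc | eqt]
   | |- typ _ (_ ++ _) (App _ _) _ => eapply typ_app; [tcc | tcc | eqt]
   | |- typ _ (_ ++ _) (lift _ 0 _) _ =>
       eapply typ_leaf; [tcext | eassumption | reflexivity | eqt]
   | |- typ _ ([] ++ _) _ _ => eapply typ_base; [eassumption | eqt]
   end
  with conv := eapply typ_conv; [tc | eqconv | tcc]
  with eqconv := match goal with |- eqr_in _ ?D _ _ => unfold eqr_in;
     match goal with HJ : judg_eq _ |- _ =>
     try (eapply (eqr_rw_l _ HJ);
          [match goal with Hq : context [eqn_lhs] |- _ => eapply (Hq D) end;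
             [tcc | tcc]
          | unfold eqn_rhs; norm]);
     try (eapply (eqr_rw_r _ HJ);
          [match goal with Hq : context [eqn_lhs] |- _ => eapply (Hq D) end;
             [tcc | tcc]
          | unfold eqn_rhs; norm]);
     unfolds; norm; beta_normalize HJ end end.

Section Paradox.
Variables (eqr : term -> term -> Prop) (G : ctx) (A it mt : term).
Hypothesis eqr_judg : judg_eq eqr.
Hypothesis A_kind : typ eqr G A (Srt Box).
Hypothesis it_typ : typ eqr G it (arr (TT A) A).
Hypothesis mt_typ : typ eqr G mt (arr A (TT A)).
Hypothesis match_intro : forall (D : ctx) (u p : term),
  typ eqr (D ++ G) u (TT (lift (length D) 0 A)) ->
  typ eqr (D ++ G) p (Pow (lift (length D) 0 A)) ->
  eqr (eqn_lhs (length D) it mt u p) (eqn_rhs (length D) A it mt u p).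

Local Notation Pred k := (Pi (lift k 0 A) (Srt Star)).
Local Notation Match k x P := (App (App (lift k 0 mt) x) P).
Local Notation IntroMatch k x := (App (lift k 0 it) (App (lift k 0 mt) x)).

Definition closed_ty (k : nat) (P : term) : term :=
  Pi (lift k 0 A) (Pi (Match (S k) (Var 0) (lift 1 0 P)) (App (lift 2 0 P) (Var 1))).

Definition stable (k : nat) (x : term) : term :=
  Pi (Pred k) (Pi (Match (S k) (lift 1 0 x) (Var 0))
                  (App (Var 1) (IntroMatch (S (S k)) (lift 2 0 x)))).

Definition shift (k : nat) (P : term) : term :=
  Lam (lift k 0 A) (App (lift 1 0 P) (IntroMatch (S k) (Var 0))).

Definition Cl : term := Lam (Pred 0) (closed_ty 1 (Var 0)).
Definition Omega : term := App it Cl.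

(* Given a closed P with
   proof h, the predicate  shift P  is closed too (by h at  intro (match x)),
   and  match Omega P  converts to  Cl (shift P). *)
Definition induction_ty : term :=
  Pi (Pred 0) (Pi (closed_ty 1 (Var 0)) (App (Var 1) (lift 2 0 Omega))).
Definition ind : term :=
  Lam (Pred 0) (Lam (closed_ty 1 (Var 0))
    (App (App (Var 0) (lift 2 0 Omega))
       (Lam (lift 2 0 A) (Lam (Match 3 (Var 0) (shift 3 (Var 2)))
          (App (App (Var 2) (IntroMatch 4 (Var 1))) (Var 0)))))).

Definition russell : term := Lam A (Pi (stable 1 (Var 0)) Bot).

(* The Russell predicate is closed: from  match x R  and stability of x we get
   R (intro (match x)), which is refuted by the stability of  intro (match x),
   itself obtained from that of x through  shift. *)
Definition russell_closed : term :=
  Lam A (Lam (Match 1 (Var 0) (lift 1 0 russell)) (Lam (stable 2 (Var 1))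
    (App (App (App (Var 0) (lift 3 0 russell)) (Var 1))
       (Lam (Pred 3) (Lam (Match 4 (IntroMatch 4 (Var 3)) (Var 0))
          (App (App (Var 2) (shift 5 (Var 1))) (Var 0))))))).

(* Omega is stable:  match Omega Q  is  Cl (shift Q), so induction applies. *)
Definition omega_stable : term :=
  Lam (Pred 0) (Lam (Match 1 (lift 1 0 Omega) (Var 0))
    (App (App (lift 2 0 ind) (shift 2 (Var 1))) (Var 0))).

Definition paradox : term := App (App (App ind russell) russell_closed) omega_stable.

(* The closed terms are leaves for the typechecker; only Cl and russell ever
   need to be unfolded inside a conversion. *)
Opaque Cl ind russell russell_closed omega_stable.
Ltac unfolds ::= cbv [Cl russell].

Lemma star_G : typ eqr G (Srt Star) (Srt Box).
Proof. exact (star_in _ _ _ _ A_kind). Qed.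

Ltac typecheck :=
  cbv [closed_ty stable shift Omega induction_ty Bot Pow arr TT] in *; norm;
  repeat match goal with H : typ _ _ _ _ |- _ => progress norm_in H end;
  pose proof star_G; change G with ([] ++ G); tcc.

Lemma Cl_typ : typ eqr G Cl (TT A).
Proof. cbv [Cl]; typecheck. Qed.

Lemma ind_typ : typ eqr G ind induction_ty.
Proof. pose proof Cl_typ. cbv [ind]; typecheck. Qed.

Lemma russell_typ : typ eqr G russell (Pow A).
Proof. cbv [russell]; typecheck. Qed.

Lemma russell_closed_typ : typ eqr G russell_closed (closed_ty 0 russell).
Proof. pose proof Cl_typ; pose proof russell_typ. cbv [russell_closed]; typecheck. Qed.

Lemma omega_stable_typ : typ eqr G omega_stable (stable 0 Omega).
Proof. pose proof Cl_typ; pose proof ind_typ. cbv [omega_stable]; typecheck. Qed.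

Lemma paradox_typ : typ eqr G paradox Bot.
Proof.
  pose proof Cl_typ; pose proof ind_typ; pose proof russell_typ;
    pose proof russell_closed_typ; pose proof omega_stable_typ.
  cbv [paradox]; typecheck.
Qed.

End Paradox.

Theorem theorem2 (eqr : term -> term -> Prop) (G : ctx) (A it mt : term) :
  judg_eq eqr ->
  typ eqr G A (Srt Box) ->
  typ eqr G it (arr (TT A) A) ->
  typ eqr G mt (arr A (TT A)) ->
  (forall (D : ctx) (u p : term),
      typ eqr (D ++ G) u (TT (lift (length D) 0 A)) ->
      typ eqr (D ++ G) p (Pow (lift (length D) 0 A)) ->
      eqr (eqn_lhs (length D) it mt u p) (eqn_rhs (length D) A it mt u p)) ->
  exists t : term, typ eqr G t Bot.
Proof.
  intros HJ HA Hit Hmt Heq.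
  exists (paradox A it mt).
  exact (paradox_typ eqr G A it mt HJ HA Hit Hmt Heq).
Qed.
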